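(* Let $B$ be a Blaschke product in $\mathbb{C}_0$ with zero sequence $\mathscr{Z}_B$. Then for every $\gamma>0$ and every $t\in\mathbb{R}$ such that $B$ has no zeros on the line $\mathrm{Im}\,s=t$, \[\left|\mathrm{Im}\int_0^\gamma \frac{B'(\sigma+it)}{B(\sigma+it)}\,\sigma\,d\sigma\right| \leq \left(2\pi + \frac{\pi^2}{3} \gamma^2 \right) \sup_{\tau\in\mathbb{R}} \sum_{\substack{\alpha \in \mathscr{Z}_B \\ \tau \leq \mathrm{Im}\,\alpha \leq \tau+1 }} \mathrm{Re}\,\alpha.\]
   Context: $\mathbb{C}_0=\{s:\mathrm{Re}\,s>0\}$. A Blaschke product in $\mathbb{C}_0$ is $B(s)=\prod_{\alpha\in\mathscr{Z}_B}\frac{1-\overline{\alpha}^2}{|1-\alpha^2|}\frac{s-\alpha}{s+\overline{\alpha}}$, where the sequence $\mathscr{Z}_B\subset\mathbb{C}_0$ (repeated according to multiplicity) satisfies $\sum_{\alpha\in\mathscr{Z}_B}\frac{\mathrm{Re}\,\alpha}{1+(\mathrm{Im}\,\alpha)^2}<\infty$. *)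

From Stdlib Require Import Reals.
From Coquelicot Require Import Coquelicot.
Open Scope R_scope.

(* A zero sequence is encoded as Z : nat -> option C; the entries [Some a]
   list the zeros (repeated according to multiplicity), [None] entries are
   padding, so finite (or empty) zero sets are allowed. *)

(* normalising constant (1 - conj(a)^2)/|1 - a^2|; for a = 1 (where
   |1-a^2| = 0 and the formula is undefined) we use the constant 1. *)
Definition bconst (a : C) : C :=
  if Req_EM_T (Cmod (1 - a * a)%C) 0 then 1%C
  else ((1 - Cconj a * Cconj a) / RtoC (Cmod (1 - a * a)%C))%C.

Definition bfactor (a s : C) : C :=
  (bconst a * ((s - a) / (s + Cconj a)))%C.

Fixpoint bpartial (Z : nat -> option C) (s : C) (N : nat) : C :=
  match N with
  | O => 1%C
  | S n => (bpartial Z s n *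
            match Z n with Some a => bfactor a s | None => 1%C end)%C
  end.

Definition zeros_in_C0 (Z : nat -> option C) : Prop :=
  forall n a, Z n = Some a -> 0 < Re a.

Definition blaschke_cond (Z : nat -> option C) : Prop :=
  ex_series (fun n => match Z n with
                      | Some a => Re a / (1 + (Im a) ^ 2)
                      | None => 0 end).

Definition is_blaschke_product (Z : nat -> option C) (B : C -> C) : Prop :=
  forall s : C, 0 < Re s ->
    filterlim (bpartial Z s) eventually (locally (B s)).

Fixpoint window_sum (Z : nat -> option C) (tau : R) (N : nat) : R :=
  match N with
  | O => 0
  | S n => window_sum Z tau n +
           match Z n with
           | Some a =>
               if Rle_dec tau (Im a) then
                 if Rle_dec (Im a) (tau + 1) then Re a else 0
               else 0
           | None => 0 end
  end.

From Stdlib Require Import Reals Lra Psatz Ranalysis5 Classical.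
From Coquelicot Require Import Coquelicot.
Open Scope R_scope.

(* On the line [Im s = t], with [d = t - Im α], each Blaschke factor is a unimodular
   constant times [exp (ψ1 + i ψ2)] with explicit [ψ1 = log |.|] and [ψ2 = arg] as
   functions of [σ = Re s]. The Blaschke condition makes the series of the σ-derivatives
   converge locally uniformly on [σ > 0], so [Im (B'/B)(σ + i t) = Σ ∂σ ψ2]; and
   [σ ∂σ ψ2] has an explicit primitive [H] with [H(0) = 0], whence the integral from [0]
   to [γ] is [Σ H(γ)]. Each [|H(γ)|] is at most [π Re α] and at most
   [(3/4) γ² Re α / d²]; grouping the zeros by [j <= |d| < j + 1] into unit windows and
   using [Σ 1/j² <= 2] gives the bound [(2π + 3γ²) M <= (2π + π² γ² / 3) M]. *)

Lemma continuity_pt_of_is_derive (f : R -> R) x l : is_derive f x l -> continuity_pt f x.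
Proof.
  intros H. apply continuity_pt_filterlim.
  apply (ex_derive_continuous (K := R_AbsRing) (V := R_NormedModule)). now exists l.
Qed.

Lemma derive_nonpos_le (f df : R -> R) x y :
  x <= y -> (forall z, is_derive f z (df z)) -> (forall z, x <= z <= y -> df z <= 0) ->
  f y <= f x.
Proof.
  intros Hxy Hd Hneg.
  destruct (MVT_gen f x y df) as [c [Hc E]].
  - intros; apply Hd.
  - intros; eapply continuity_pt_of_is_derive, Hd.
  - rewrite Rmin_left, Rmax_right in Hc by lra. specialize (Hneg c Hc). nra.
Qed.

Lemma Rabs_sub_le_of_derive_bound (f df : R -> R) x y K :
  (forall z, is_derive f z (df z)) -> (forall z, Rmin x y <= z <= Rmax x y -> Rabs (df z) <= K) ->
  Rabs (f y - f x) <= K * Rabs (y - x).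
Proof.
  intros Hd Hb. destruct (MVT_gen f x y df) as [c [Hc E]].
  - intros; apply Hd.
  - intros; eapply continuity_pt_of_is_derive, Hd.
  - rewrite E, Rabs_mult. apply Rmult_le_compat_r; [apply Rabs_pos | auto].
Qed.

Lemma is_derive_sub_const (f : R -> R) c y l : is_derive f y l -> is_derive (fun z => f z - c) y l.
Proof.
  intros H. apply is_derive_Reals. replace l with (l - 0) by ring.
  apply (derivable_pt_lim_minus f (fun _ => c)); [now apply is_derive_Reals | apply derivable_pt_lim_const].
Qed.

Lemma Rabs_div_le_of_bounds n p q : 0 < p -> - q <= n <= q -> Rabs (n / p) <= q / p.
Proof.
  intros Hp Hn. unfold Rdiv. rewrite Rabs_mult, Rabs_inv, (Rabs_pos_eq p) by lra.
  apply Rmult_le_compat_r; [left; apply Rinv_0_lt_compat; lra | apply Rabs_le; lra].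
Qed.

Definition half_ball (x : R) (Hx : 0 < x) : posreal := mkposreal (x / 2) ltac:(lra).

Lemma Boule_half_ball x Hx y : Boule x (half_ball x Hx) y -> x / 2 < y < 3 * x / 2.
Proof. unfold Boule, half_ball; simpl. intros H. apply Rabs_def2 in H. lra. Qed.

Lemma filterlim_at_right_continuity_pt (f : R -> R) x :
  continuity_pt f x -> filterlim f (at_right x) (locally (f x)).
Proof.
  intros H. apply continuity_pt_filterlim in H.
  eapply filterlim_filter_le_1; [apply filter_le_within | exact H].
Qed.

Lemma at_right_lt x y : x < y -> at_right x (fun e => x < e < y).
Proof.
  intros Hxy. exists (mkposreal (y - x) ltac:(lra)). intros e He Hxe.
  unfold ball in He; simpl in He; unfold AbsRing_ball, abs, minus, plus, opp in He; simpl in He.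
  apply Rabs_def2 in He. lra.
Qed.

(** * Series of functions *)

Fixpoint psum (u : nat -> R) (N : nat) : R :=
  match N with O => 0 | S n => psum u n + u n end.

Lemma psum_S_sum_f_R0 (u : nat -> R) n : psum u (S n) = sum_f_R0 u n.
Proof. induction n as [|n IH]; simpl in *; [ring | rewrite IH; ring]. Qed.

Lemma psum_minus (u v : nat -> R) n : psum (fun k => u k - v k) n = psum u n - psum v n.
Proof. induction n as [|n IH]; simpl; [ring | rewrite IH; ring]. Qed.

Lemma Rabs_psum_le (u : nat -> R) n : Rabs (psum u n) <= psum (fun k => Rabs (u k)) n.
Proof.
  induction n as [|n IH]; simpl; [rewrite Rabs_R0; lra|].
  eapply Rle_trans; [apply Rabs_triang | lra].
Qed.

Lemma is_lim_seq_psum (u : nat -> R) : ex_series u -> is_lim_seq (psum u) (Series u).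
Proof.
  intros H. apply is_lim_seq_incr_1. apply Series_correct in H.
  eapply is_lim_seq_ext; [|exact H].
  intros n. now rewrite sum_n_Reals, <- psum_S_sum_f_R0.
Qed.

Lemma ex_series_le_eventually (u m : nat -> R) K0 :
  (forall k, (K0 <= k)%nat -> Rabs (u k) <= m k) -> ex_series m -> ex_series u.
Proof.
  intros H Hm. apply (proj2 (ex_series_incr_n (K := R_AbsRing) (V := R_NormedModule) u K0)).
  apply (ex_series_le (K := R_AbsRing) (V := R_CompleteNormedModule) _ (fun k => m (K0 + k)%nat)).
  - intros n. apply H. lia.
  - now apply (proj1 (ex_series_incr_n (K := R_AbsRing) (V := R_NormedModule) m K0)).
Qed.

Lemma ex_series_scal_R (c : R) (u : nat -> R) : ex_series u -> ex_series (fun k => c * u k).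
Proof. apply (ex_series_scal_l (K := R_AbsRing) (V := R_NormedModule)). Qed.

Lemma Series_sub_psum (u : nat -> R) n : ex_series u -> Series u - psum u n = Series (fun k => u (n + k)%nat).
Proof.
  intros Hu. destruct n as [|n]; simpl; [apply Rminus_0_r|].
  rewrite (Series_incr_n u (S n)) by (auto; lia). simpl pred.
  rewrite <- psum_S_sum_f_R0. simpl. ring.
Qed.

Lemma Rabs_Series_le (u m : nat -> R) :
  (forall k, Rabs (u k) <= m k) -> ex_series m -> Rabs (Series u) <= Series m.
Proof.
  intros Hum Hm.
  assert (Habs : ex_series (fun k => Rabs (u k))).
  { apply (ex_series_le (K := R_AbsRing) (V := R_CompleteNormedModule) _ m); auto.
    intros k. unfold norm; simpl; unfold abs; simpl. now rewrite Rabs_Rabsolu. }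
  eapply Rle_trans; [now apply Series_Rabs|].
  apply Series_le; auto. intros k; split; [apply Rabs_pos | auto].
Qed.

Lemma is_lim_seq_Series_tail (m : nat -> R) :
  ex_series m -> is_lim_seq (fun n => Series (fun k => m (n + k)%nat)) 0.
Proof.
  intros Hm. apply is_lim_seq_ext with (fun n => Series m - psum m n).
  - intros n. now apply Series_sub_psum.
  - replace (Finite 0) with (Rbar_minus (Series m) (Series m)) by (simpl; f_equal; ring).
    apply is_lim_seq_minus'; [apply is_lim_seq_const | now apply is_lim_seq_psum].
Qed.

Section WeierstrassMTest.

Variables (u : nat -> R -> R) (m : nat -> R) (c : R) (r : posreal) (K0 : nat).
Hypothesis summable_m : ex_series m.
Hypothesis u_le_m : forall k y, (K0 <= k)%nat -> Boule c r y -> Rabs (u k y) <= m k.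

Lemma CVU_Series :
  CVU (fun n y => psum (fun k => u k y) n) (fun y => Series (fun k => u k y)) c r.
Proof.
  intros eps Heps.
  pose proof (is_lim_seq_Series_tail m summable_m) as Htail. apply is_lim_seq_spec in Htail.
  destruct (Htail (mkposreal eps Heps)) as [N HN]; simpl in HN.
  exists (max K0 N). intros n y Hn Hy.
  rewrite Series_sub_psum by (apply (ex_series_le_eventually _ m K0); auto).
  eapply Rle_lt_trans.
  - apply (Rabs_Series_le _ (fun k => m (n + k)%nat)); [intros k; apply u_le_m; auto; lia|].
    now apply (proj1 (ex_series_incr_n (K := R_AbsRing) (V := R_NormedModule) m n)).
  - specialize (HN n ltac:(lia)). rewrite Rminus_0_r in HN. exact (Rle_lt_trans _ _ _ (Rle_abs _) HN).
Qed.

Lemma continuity_pt_Series :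
  (forall k y, Boule c r y -> continuity_pt (u k) y) ->
  forall y, Boule c r y -> continuity_pt (fun y => Series (fun k => u k y)) y.
Proof.
  intros Hcont. apply (CVU_continuity _ _ c r CVU_Series).
  intros n y Hy. induction n as [|n IH]; simpl.
  - apply continuity_pt_const. now intros ? ?.
  - apply (continuity_pt_plus (fun y => psum (fun k => u k y) n) (u n)); auto.
Qed.

End WeierstrassMTest.

Lemma is_derive_Series (u du : nat -> R -> R) (m : nat -> R) (c : R) (r : posreal) K0 :
  ex_series m ->
  (forall k y, Boule c r y -> is_derive (u k) y (du k y)) ->
  (forall k y, Boule c r y -> continuity_pt (du k) y) ->
  (forall k y, (K0 <= k)%nat -> Boule c r y -> Rabs (du k y) <= m k) ->
  (forall y, Boule c r y -> ex_series (fun k => u k y)) ->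
  is_derive (fun y => Series (fun k => u k y)) c (Series (fun k => du k c)).
Proof.
  intros Hm Hder Hcont Hbound Hex. apply is_derive_Reals.
  apply (derivable_pt_lim_CVU (fun n y => psum (fun k => u k y) n)
           (fun n y => psum (fun k => du k y) n) (fun y => Series (fun k => u k y))
           (fun y => Series (fun k => du k y)) c c r).
  - apply Boule_center.
  - intros y n Hy. apply is_derive_Reals. induction n as [|n IH]; simpl.
    + apply is_derive_Reals, derivable_pt_lim_const.
    + apply (is_derive_plus (fun y => psum (fun k => u k y) n) (u n)); auto.
  - intros y Hy. apply is_lim_seq_Reals, is_lim_seq_psum; auto.
  - now apply (CVU_Series _ m _ _ K0).
  - now apply (continuity_pt_Series _ m _ _ K0).
Qed.

Lemma sum_f_R0_ge_term (f : nat -> R) n j :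
  (forall i, 0 <= f i) -> (j <= n)%nat -> f j <= sum_f_R0 f n.
Proof.
  intros Hf Hj. induction n as [|n IH].
  - replace j with 0%nat by lia. simpl. lra.
  - simpl. pose proof (Hf (S n)). destruct (Nat.eq_dec j (S n)) as [->|Hne].
    + pose proof (cond_pos_sum f n Hf). lra.
    + specialize (IH ltac:(lia)). lra.
Qed.

Definition cexp (x y : R) : C := (exp x * cos y, exp x * sin y).

Lemma cexp_add x1 y1 x2 y2 : (cexp x1 y1 * cexp x2 y2)%C = cexp (x1 + x2) (y1 + y2).
Proof. unfold cexp, Cmult; simpl. rewrite exp_plus, cos_plus, sin_plus. f_equal; ring. Qed.

Lemma cexp_0 : cexp 0 0 = 1%C.
Proof. unfold cexp. rewrite exp_0, cos_0, sin_0. unfold RtoC. f_equal; ring. Qed.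

Lemma cexp_neq0 x y : cexp x y <> 0%C.
Proof.
  intros H. injection H as Hre Him.
  pose proof (exp_pos x). pose proof (sin2_cos2 y). unfold Rsqr in *.
  apply Rmult_integral in Hre. apply Rmult_integral in Him. destruct Hre, Him; nra.
Qed.

Lemma Rabs_Im_le_Cmod (z : C) : Rabs (Im z) <= Cmod z.
Proof.
  rewrite <- (Rabs_pos_eq (Cmod z)) by apply Cmod_ge_0.
  apply Rsqr_le_abs_0. unfold Rsqr. pose proof (Cmod2_alt z). pose proof (pow2_ge_0 (Re z)). nra.
Qed.

Lemma is_derive_horizontal (f : C -> C) (x t : R) (l : C) :
  @is_derive C_AbsRing C_NormedModule f (x, t) l ->
  is_derive (fun y => Re (f (y, t))) x (Re l) /\ is_derive (fun y => Im (f (y, t))) x (Im l).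
Proof.
  intros [_ Hdom].
  assert (Hsmall : forall eps : posreal, locally x (fun y =>
            Cmod (f (y, t) - f (x, t) - RtoC (y - x) * l)%C <= eps * Rabs (y - x))).
  { intros eps. destruct (Hdom (x, t) (fun P H => H) eps) as [del Hdel]. exists del.
    intros y Hy.
    assert (Hyt : ((y, t) + - (x, t))%C = RtoC (y - x))
      by (unfold RtoC, Cplus, Copp; simpl; f_equal; ring).
    assert (Hball : @ball (AbsRing_UniformSpace C_AbsRing) (x, t) del (y, t)).
    { unfold ball; simpl; unfold AbsRing_ball, abs, minus, plus, opp; simpl.
      change (Cmod (Cplus (y, t) (Copp (x, t))) < del). rewrite Hyt, Cmod_R. exact Hy. }
    specialize (Hdel (y, t) Hball).
    change (Cmod (f (y, t) + - f (x, t) + - (((y, t) + - (x, t)) * l))%C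
            <= eps * Cmod ((y, t) + - (x, t))%C) in Hdel.
    rewrite Hyt, Cmod_R in Hdel. exact Hdel. }
  split; (split; [apply is_linear_scal_l|]); intros x0 Hx0 eps;
    apply (is_filter_lim_locally_unique (K := R_AbsRing) (V := R_NormedModule)) in Hx0; subst x0;
    generalize (Hsmall eps); apply filter_imp; intros y Hy; eapply Rle_trans; try exact Hy;
    unfold norm, minus, plus, opp, scal, mult; simpl; unfold abs; simpl.
  - eapply Rle_trans; [|apply re_le_Cmod]. simpl. right. f_equal. unfold Re, Im, mult; simpl. ring.
  - eapply Rle_trans; [|apply Rabs_Im_le_Cmod]. simpl. right. f_equal. unfold Re, Im, mult; simpl. ring.
Qed.

Lemma is_lim_seq_Re_Im (u : nat -> C) (l : C) :
  filterlim u eventually (locally l) ->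
  is_lim_seq (fun n => Re (u n)) (Re l) /\ is_lim_seq (fun n => Im (u n)) (Im l).
Proof.
  intros H. rewrite filterlim_locally in H.
  split; apply is_lim_seq_spec; intros eps; destruct (H eps) as [N HN]; exists N; intros n Hn;
    destruct (HN n Hn); auto.
Qed.

Lemma filterlim_C_unique (u : nat -> C) (l m : C) :
  filterlim u eventually (locally l) ->
  is_lim_seq (fun n => Re (u n)) (Re m) -> is_lim_seq (fun n => Im (u n)) (Im m) -> l = m.
Proof.
  intros Hl Hre Him. destruct (is_lim_seq_Re_Im u l Hl) as [Hre' Him'].
  apply is_lim_seq_unique in Hre, Him, Hre', Him'.
  rewrite Hre in Hre'. rewrite Him in Him'. injection Hre' as Ere. injection Him' as Eim.
  destruct l, m; unfold Re, Im in *; simpl in *. now f_equal.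
Qed.

Lemma is_lim_seq_Cmult_cexp (u : nat -> C) (l : C) (x y : nat -> R) (lx ly : R) :
  filterlim u eventually (locally l) -> is_lim_seq x lx -> is_lim_seq y ly ->
  is_lim_seq (fun n => Re (u n * cexp (x n) (y n))%C) (Re (l * cexp lx ly)%C) /\
  is_lim_seq (fun n => Im (u n * cexp (x n) (y n))%C) (Im (l * cexp lx ly)%C).
Proof.
  intros Hu Hx Hy. destruct (is_lim_seq_Re_Im u l Hu) as [Hre Him].
  assert (Hexp : is_lim_seq (fun n => exp (x n)) (exp lx))
    by (apply is_lim_seq_continuous; auto; apply derivable_continuous_pt, derivable_pt_exp).
  assert (Hcos : is_lim_seq (fun n => cos (y n)) (cos ly))
    by (apply is_lim_seq_continuous; auto; apply derivable_continuous_pt, derivable_pt_cos).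
  assert (Hsin : is_lim_seq (fun n => sin (y n)) (sin ly))
    by (apply is_lim_seq_continuous; auto; apply derivable_continuous_pt, derivable_pt_sin).
  unfold cexp, Cmult, Re, Im in *; simpl in *. split.
  - apply is_lim_seq_minus'; apply is_lim_seq_mult'; auto; apply is_lim_seq_mult'; auto.
  - apply is_lim_seq_plus'; apply is_lim_seq_mult'; auto; apply is_lim_seq_mult'; auto.
Qed.

Lemma is_derive_Cmult_cexp_at_0 (c : C) (g1 g2 : R -> R) x d1 d2 :
  is_derive g1 x d1 -> is_derive g2 x d2 -> g1 x = 0 -> g2 x = 0 ->
  is_derive (fun y => Re (c * cexp (g1 y) (g2 y))%C) x (Re (c * (d1, d2))%C) /\
  is_derive (fun y => Im (c * cexp (g1 y) (g2 y))%C) x (Im (c * (d1, d2))%C).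
Proof.
  intros H1 H2 E1 E2. destruct c as [p q]. unfold cexp, Cmult, Re, Im; simpl.
  split; auto_derive;
    try (repeat split; (exists d1; exact H1) || (exists d2; exact H2) || auto);
    replace (Derive (fun y => g1 y) x) with d1 by (symmetry; now apply is_derive_unique);
    replace (Derive (fun y => g2 y) x) with d2 by (symmetry; now apply is_derive_unique);
    rewrite E1, E2, exp_0, cos_0, sin_0; ring.
Qed.

(** * One Blaschke factor on a horizontal line *)

(* For a zero α = a + i b and s = σ + i t, put d = t - b. Then
   (s - α)/(s + conj α) = ((σ - a) + i d)/((σ + a) + i d)
   = exp (log_abs_factor a d σ + i arg_factor a d σ). *)
Definition sqdist_sub (a d s : R) : R := (s - a) ^ 2 + d ^ 2.
Definition sqdist_add (a d s : R) : R := (s + a) ^ 2 + d ^ 2.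

Definition log_abs_factor (a d s : R) : R :=
  ln (sqdist_sub a d s / sqdist_add a d s) / 2.
Definition arg_factor (a d s : R) : R := atan ((s + a) / d) - atan ((s - a) / d).

Definition log_abs_factor' (a d s : R) : R :=
  (s - a) / sqdist_sub a d s - (s + a) / sqdist_add a d s.
Definition arg_factor' (a d s : R) : R := d / sqdist_add a d s - d / sqdist_sub a d s.

(* The primitive of [s * arg_factor' a d s] vanishing at [s = 0]. *)
Definition arg_moment (a d s : R) : R :=
  - (d / 2 * ln (sqdist_sub a d s / sqdist_add a d s)
     + a * (atan ((s - a) / d) + atan ((s + a) / d))).

Lemma sqdist_sub_gt0 a d s : d <> 0 -> 0 < sqdist_sub a d s.
Proof. intros Hd; unfold sqdist_sub; pose proof (pow2_gt_0 d Hd); pose proof (pow2_ge_0 (s - a)); lra. Qed.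

Lemma sqdist_add_gt0 a d s : d <> 0 -> 0 < sqdist_add a d s.
Proof. intros Hd; unfold sqdist_add; pose proof (pow2_gt_0 d Hd); pose proof (pow2_ge_0 (s + a)); lra. Qed.

Ltac sqdist_pos a d s Hd :=
  let H1 := fresh in let H2 := fresh in
  pose proof (sqdist_sub_gt0 a d s Hd) as H1; pose proof (sqdist_add_gt0 a d s Hd) as H2;
  unfold sqdist_sub, sqdist_add in *; simpl in H1, H2; rewrite ?Rmult_1_r in H1, H2.

Lemma is_derive_log_abs_factor a d s :
  d <> 0 -> is_derive (log_abs_factor a d) s (log_abs_factor' a d s).
Proof.
  intros Hd; unfold log_abs_factor, log_abs_factor'; sqdist_pos a d s Hd.
  auto_derive; rewrite ?Rmult_1_r.
  - repeat split; try lra. apply Rdiv_lt_0_compat; lra.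
  - field; repeat split; lra.
Qed.

Lemma is_derive_arg_factor a d s : d <> 0 -> is_derive (arg_factor a d) s (arg_factor' a d s).
Proof.
  intros Hd; unfold arg_factor, arg_factor'; sqdist_pos a d s Hd.
  auto_derive; rewrite ?Rmult_1_r.
  - repeat split; lra.
  - field; repeat split; lra.
Qed.

Lemma is_derive_arg_moment a d s :
  d <> 0 -> is_derive (arg_moment a d) s (s * arg_factor' a d s).
Proof.
  intros Hd; unfold arg_moment, arg_factor'; sqdist_pos a d s Hd.
  auto_derive; rewrite ?Rmult_1_r.
  - repeat split; try lra. apply Rdiv_lt_0_compat; lra.
  - field; repeat split; lra.
Qed.

Lemma ex_derive_log_abs_factor' a d s : d <> 0 -> ex_derive (log_abs_factor' a d) s.
Proof. intros Hd; unfold log_abs_factor'; sqdist_pos a d s Hd. auto_derive; repeat split; lra. Qed.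

Lemma ex_derive_arg_factor' a d s : d <> 0 -> ex_derive (arg_factor' a d) s.
Proof. intros Hd; unfold arg_factor'; sqdist_pos a d s Hd. auto_derive; repeat split; lra. Qed.

Lemma Rabs_log_abs_factor'_le a d s :
  d <> 0 -> 0 <= a -> 0 <= s -> Rabs (log_abs_factor' a d s) <= 2 * a / sqdist_sub a d s.
Proof.
  intros Hd Ha Hs. pose proof (sqdist_sub_gt0 a d s Hd). pose proof (sqdist_add_gt0 a d s Hd).
  replace (log_abs_factor' a d s)
    with (2 * a * (s ^ 2 - a ^ 2 - d ^ 2) / (sqdist_sub a d s * sqdist_add a d s))
    by (unfold log_abs_factor', sqdist_sub, sqdist_add in *; field; lra).
  replace (2 * a / sqdist_sub a d s)
    with (2 * a * sqdist_add a d s / (sqdist_sub a d s * sqdist_add a d s)) by (field; lra).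
  apply Rabs_div_le_of_bounds; [nra | unfold sqdist_add; split; nra].
Qed.

Lemma Rabs_arg_factor'_le a d s :
  d <> 0 -> 0 <= a -> 0 <= s -> Rabs (arg_factor' a d s) <= 2 * a / sqdist_sub a d s.
Proof.
  intros Hd Ha Hs. pose proof (sqdist_sub_gt0 a d s Hd). pose proof (sqdist_add_gt0 a d s Hd).
  replace (arg_factor' a d s) with (- 4 * s * a * d / (sqdist_sub a d s * sqdist_add a d s))
    by (unfold arg_factor', sqdist_sub, sqdist_add in *; field; lra).
  replace (2 * a / sqdist_sub a d s)
    with (2 * a * sqdist_add a d s / (sqdist_sub a d s * sqdist_add a d s)) by (field; lra).
  apply Rabs_div_le_of_bounds; [nra|].
  pose proof (pow2_ge_0 (s - d)); pose proof (pow2_ge_0 (s + d)).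
  unfold sqdist_add; split; nra.
Qed.

Lemma arg_moment_0 a d : d <> 0 -> arg_moment a d 0 = 0.
Proof.
  intros Hd. unfold arg_moment.
  replace ((0 - a) / d) with (- ((0 + a) / d)) by (unfold Rdiv; ring).
  replace (sqdist_sub a d 0) with (sqdist_add a d 0) by (unfold sqdist_sub, sqdist_add; ring).
  rewrite atan_opp, Rdiv_diag by (pose proof (sqdist_add_gt0 a d 0 Hd); lra).
  rewrite ln_1. ring.
Qed.

Lemma arg_moment_opp_d a d s : arg_moment a (- d) s = - arg_moment a d s.
Proof.
  unfold arg_moment, sqdist_sub, sqdist_add.
  replace ((s - a) / - d) with (- ((s - a) / d)) by (unfold Rdiv; rewrite Rinv_opp; ring).
  replace ((s + a) / - d) with (- ((s + a) / d)) by (unfold Rdiv; rewrite Rinv_opp; ring).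
  replace ((- d) ^ 2) with (d ^ 2) by ring.
  rewrite !atan_opp. unfold Rdiv. ring.
Qed.

Lemma arg_moment_opp_s a d s : d <> 0 -> arg_moment a d (- s) = - arg_moment a d s.
Proof.
  intros Hd. pose proof (sqdist_sub_gt0 a d s Hd). pose proof (sqdist_add_gt0 a d s Hd).
  unfold arg_moment.
  replace (sqdist_sub a d (- s)) with (sqdist_add a d s) by (unfold sqdist_sub, sqdist_add; ring).
  replace (sqdist_add a d (- s)) with (sqdist_sub a d s) by (unfold sqdist_sub, sqdist_add; ring).
  replace (sqdist_add a d s / sqdist_sub a d s) with (/ (sqdist_sub a d s / sqdist_add a d s))
    by (field; lra).
  rewrite ln_Rinv by (apply Rdiv_lt_0_compat; lra).
  replace ((- s - a) / d) with (- ((s + a) / d)) by (unfold Rdiv; ring).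
  replace ((- s + a) / d) with (- ((s - a) / d)) by (unfold Rdiv; ring).
  rewrite !atan_opp. ring.
Qed.

Lemma Rabs_arg_moment_abs a d s :
  d <> 0 -> Rabs (arg_moment a d s) = Rabs (arg_moment a (Rabs d) (Rabs s)).
Proof.
  intros Hd.
  destruct (Rle_or_lt 0 d);
    [rewrite (Rabs_pos_eq d) by lra | rewrite (Rabs_left d), arg_moment_opp_d, Rabs_Ropp by lra];
    (destruct (Rle_or_lt 0 s);
      [now rewrite (Rabs_pos_eq s) by lra
      | now rewrite (Rabs_left s), arg_moment_opp_s, Rabs_Ropp by (auto || lra)]).
Qed.

Lemma arg_moment_nonpos a d s : 0 < d -> 0 < a -> 0 <= s -> arg_moment a d s <= 0.
Proof.
  intros Hd Ha Hs. rewrite <- (arg_moment_0 a d) by lra.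
  apply (derive_nonpos_le (arg_moment a d) (fun y => y * arg_factor' a d y)); auto.
  - intros; apply is_derive_arg_moment; lra.
  - intros y Hy. assert (Hd' : d <> 0) by lra.
    pose proof (sqdist_sub_gt0 a d y Hd'). pose proof (sqdist_add_gt0 a d y Hd').
    replace (y * arg_factor' a d y)
      with (- (4 * (y * y) * (a * d) / (sqdist_sub a d y * sqdist_add a d y)))
      by (unfold arg_factor', sqdist_sub, sqdist_add in *; field; lra).
    enough (0 <= 4 * (y * y) * (a * d) / (sqdist_sub a d y * sqdist_add a d y)) by lra.
    apply Rdiv_le_0_compat; [|nra].
    assert (0 <= y * y) by nra. assert (0 <= a * d) by nra. nra.
Qed.

Lemma opp_arg_moment_le_pi a d s : 0 < d -> 0 < a -> 0 <= s -> - arg_moment a d s <= PI * a.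
Proof.
  intros Hd Ha Hs. assert (Hd' : d <> 0) by lra.
  pose proof (sqdist_sub_gt0 a d s Hd') as Hsub. pose proof (sqdist_add_gt0 a d s Hd') as Hadd.
  assert (Hln : ln (sqdist_sub a d s / sqdist_add a d s) <= 0).
  { rewrite <- ln_1. apply ln_le; [apply Rdiv_lt_0_compat; lra|].
    apply (Rdiv_le_1 _ _ Hadd). unfold sqdist_sub, sqdist_add. nra. }
  assert (d / 2 * ln (sqdist_sub a d s / sqdist_add a d s) <= 0).
  { assert (0 < d / 2) by lra. nra. }
  pose proof (atan_bound ((s - a) / d)). pose proof (atan_bound ((s + a) / d)).
  unfold arg_moment. nra.
Qed.

Lemma sqdist_prod_ge a d s : 0 < d -> 8 * s * d ^ 3 <= 3 * (sqdist_sub a d s * sqdist_add a d s).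
Proof.
  intros Hd.
  replace (sqdist_sub a d s * sqdist_add a d s)
    with (d ^ 2 * (2 * s ^ 2 + d ^ 2) + ((s ^ 2 - a ^ 2) ^ 2 + 2 * d ^ 2 * a ^ 2))
    by (unfold sqdist_sub, sqdist_add; ring).
  (* 6 s^2 - 8 s d + 3 d^2 > 0 as its discriminant is negative *)
  assert (0 <= d ^ 2 * (6 * s ^ 2 - 8 * s * d + 3 * d ^ 2)).
  { apply Rmult_le_pos; [nra|]. pose proof (pow2_ge_0 (3 * s - 2 * d)). pose proof (pow2_ge_0 d). nra. }
  pose proof (pow2_ge_0 (s ^ 2 - a ^ 2)). assert (0 <= d ^ 2 * a ^ 2) by nra. lra.
Qed.

Lemma opp_arg_moment_le_quad a d s :
  0 < d -> 0 < a -> 0 <= s -> - arg_moment a d s <= 3 / 4 * s ^ 2 * a / d ^ 2.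
Proof.
  intros Hd Ha Hs. assert (Hd' : d <> 0) by lra.
  set (F y := - arg_moment a d y - 3 / 4 * y ^ 2 * a / d ^ 2).
  enough (F s <= F 0) by (unfold F in *; rewrite arg_moment_0 in * by lra; lra).
  apply (derive_nonpos_le F (fun y => - (y * arg_factor' a d y) - 3 / 2 * y * a / d ^ 2)); auto.
  - intros y. apply (is_derive_minus (fun y => - arg_moment a d y) (fun y => 3 / 4 * y ^ 2 * a / d ^ 2)).
    + apply (is_derive_opp (arg_moment a d)), is_derive_arg_moment; lra.
    + auto_derive; auto. field; lra.
  - intros y Hy.
    pose proof (sqdist_sub_gt0 a d y Hd'). pose proof (sqdist_add_gt0 a d y Hd').
    replace (- (y * arg_factor' a d y) - 3 / 2 * y * a / d ^ 2) with
      (- (y * a * (3 * (sqdist_sub a d y * sqdist_add a d y) - 8 * y * d ^ 3))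
       / (2 * d ^ 2 * (sqdist_sub a d y * sqdist_add a d y)))
      by (unfold arg_factor', sqdist_sub, sqdist_add in *; field; lra).
    enough (0 <= y * a * (3 * (sqdist_sub a d y * sqdist_add a d y) - 8 * y * d ^ 3)
                 / (2 * d ^ 2 * (sqdist_sub a d y * sqdist_add a d y))) by (unfold Rdiv in *; lra).
    apply Rdiv_le_0_compat.
    + pose proof (sqdist_prod_ge a d y Hd). apply Rmult_le_pos; nra.
    + pose proof (pow2_gt_0 d Hd'). apply Rmult_lt_0_compat; [lra | nra].
Qed.

Lemma Rabs_arg_moment_le_pi a d s : d <> 0 -> 0 < a -> Rabs (arg_moment a d s) <= PI * a.
Proof.
  intros Hd Ha. rewrite Rabs_arg_moment_abs by auto.
  pose proof (Rabs_pos_lt d Hd). pose proof (Rabs_pos s).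
  pose proof (arg_moment_nonpos a (Rabs d) (Rabs s)).
  pose proof (opp_arg_moment_le_pi a (Rabs d) (Rabs s)).
  rewrite Rabs_left1; auto.
Qed.

Lemma Rabs_arg_moment_le_quad a d s :
  d <> 0 -> 0 < a -> Rabs (arg_moment a d s) <= 3 / 4 * s ^ 2 * a / d ^ 2.
Proof.
  intros Hd Ha. rewrite Rabs_arg_moment_abs, <- (pow2_abs s), <- (pow2_abs d) by auto.
  pose proof (Rabs_pos_lt d Hd). pose proof (Rabs_pos s).
  pose proof (arg_moment_nonpos a (Rabs d) (Rabs s)).
  pose proof (opp_arg_moment_le_quad a (Rabs d) (Rabs s)).
  rewrite Rabs_left1; auto.
Qed.

Lemma factor_cexp (a d s : R) : d <> 0 ->
  Cdiv (s - a, d) (s + a, d) = cexp (log_abs_factor a d s) (arg_factor a d s).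
Proof.
  intros Hd. pose proof (sqdist_sub_gt0 a d s Hd) as Hsub. pose proof (sqdist_add_gt0 a d s Hd) as Hadd.
  unfold cexp, log_abs_factor, arg_factor.
  rewrite cos_minus, sin_minus, !cos_atan, !sin_atan.
  set (A := (s + a) / d). set (B := (s - a) / d).
  replace (exp (ln (sqdist_sub a d s / sqdist_add a d s) / 2))
    with (sqrt (sqdist_sub a d s / sqdist_add a d s)).
  2:{ rewrite <- Rpower_sqrt by (apply Rdiv_lt_0_compat; lra). unfold Rpower. f_equal. field. }
  set (w := sqrt (sqdist_sub a d s / sqdist_add a d s)).
  set (u := sqrt (1 + A²)). set (v := sqrt (1 + B²)).
  assert (HA : 0 < 1 + A²) by (pose proof (Rle_0_sqr A); lra).
  assert (HB : 0 < 1 + B²) by (pose proof (Rle_0_sqr B); lra).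
  assert (Hw : 0 < w) by (apply sqrt_lt_R0, Rdiv_lt_0_compat; lra).
  assert (Hu : 0 < u) by (apply sqrt_lt_R0; lra).
  assert (Hv : 0 < v) by (apply sqrt_lt_R0; lra).
  assert (Hw2 : w ^ 2 = sqdist_sub a d s / sqdist_add a d s)
    by (unfold w; rewrite <- Rsqr_pow2; apply Rsqr_sqrt; left; apply Rdiv_lt_0_compat; lra).
  assert (Hu2 : u ^ 2 = 1 + A²) by (unfold u; rewrite <- Rsqr_pow2; apply Rsqr_sqrt; lra).
  assert (Hv2 : v ^ 2 = 1 + B²) by (unfold v; rewrite <- Rsqr_pow2; apply Rsqr_sqrt; lra).
  (* both sides are positive with equal squares *)
  assert (Hscale : w / (u * v) = d ^ 2 / sqdist_add a d s).
  { assert (0 < w / (u * v)) by (apply Rdiv_lt_0_compat; nra).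
    assert (0 < d ^ 2 / sqdist_add a d s) by (apply Rdiv_lt_0_compat; [apply pow2_gt_0 | ]; lra).
    enough ((w / (u * v)) ^ 2 = (d ^ 2 / sqdist_add a d s) ^ 2) by nra.
    replace ((w / (u * v)) ^ 2) with (w ^ 2 / (u ^ 2 * v ^ 2)) by (field; lra).
    rewrite Hw2, Hu2, Hv2. unfold A, B, Rsqr, sqdist_sub, sqdist_add in *.
    field; repeat split; lra. }
  unfold Cdiv, Cinv, Cmult; simpl. f_equal.
  - transitivity (w / (u * v) * (1 + A * B)); [|field; lra].
    rewrite Hscale. unfold A, B, sqdist_sub, sqdist_add in *. field. lra.
  - transitivity (w / (u * v) * (A - B)); [|field; lra].
    rewrite Hscale. unfold A, B, sqdist_sub, sqdist_add in *. field. lra.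
Qed.

Lemma one_add_sq_le_shift t b : 1 + b ^ 2 <= 2 * (1 + t ^ 2) * (1 + (t - b) ^ 2).
Proof.
  pose proof (pow2_ge_0 (t + (t - b))). pose proof (pow2_ge_0 (t * (t - b))). nra.
Qed.

Lemma div_one_add_sq_le_shift a t b :
  0 <= a -> a / (1 + (t - b) ^ 2) <= 2 * (1 + t ^ 2) * (a / (1 + b ^ 2)).
Proof.
  intros Ha. pose proof (one_add_sq_le_shift t b).
  pose proof (pow2_ge_0 (t - b)). pose proof (pow2_ge_0 b). pose proof (pow2_ge_0 t).
  replace (2 * (1 + t ^ 2) * (a / (1 + b ^ 2)))
    with (a * (2 * (1 + t ^ 2) * (1 + (t - b) ^ 2)) / ((1 + b ^ 2) * (1 + (t - b) ^ 2)))
    by (field; lra).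
  replace (a / (1 + (t - b) ^ 2)) with (a * (1 + b ^ 2) / ((1 + b ^ 2) * (1 + (t - b) ^ 2)))
    by (field; lra).
  apply Rmult_le_compat_r; [left; apply Rinv_0_lt_compat; nra | apply Rmult_le_compat_l; lra].
Qed.

Lemma Rabs_arg_moment_le a d s :
  d <> 0 -> 0 < a -> Rabs (arg_moment a d s) <= (2 * PI + 3 / 2 * s ^ 2) * (a / (1 + d ^ 2)).
Proof.
  intros Hd Ha. pose proof (pow2_ge_0 s). pose proof PI_RGT_0.
  assert (Hd2 : 0 < d ^ 2) by (apply pow2_gt_0; auto).
  replace ((2 * PI + 3 / 2 * s ^ 2) * (a / (1 + d ^ 2)))
    with (PI * a * (2 / (1 + d ^ 2)) + 3 / 4 * s ^ 2 * a * (2 / (1 + d ^ 2))) by (field; lra).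
  assert (0 <= 3 / 4 * s ^ 2 * a) by nra.
  destruct (Rle_or_lt 1 (d ^ 2)) as [Hfar|Hnear].
  - eapply Rle_trans; [apply Rabs_arg_moment_le_quad; auto|].
    assert (/ d ^ 2 <= 2 / (1 + d ^ 2)).
    { apply (Rmult_le_reg_r (d ^ 2 * (1 + d ^ 2))); [nra|].
      replace (/ d ^ 2 * (d ^ 2 * (1 + d ^ 2))) with (1 + d ^ 2) by (field; lra).
      replace (2 / (1 + d ^ 2) * (d ^ 2 * (1 + d ^ 2))) with (2 * d ^ 2) by (field; lra). lra. }
    assert (0 <= 2 / (1 + d ^ 2)) by (apply Rdiv_le_0_compat; lra).
    change (3 / 4 * s ^ 2 * a / d ^ 2) with (3 / 4 * s ^ 2 * a * / d ^ 2).
    assert (0 <= PI * a * (2 / (1 + d ^ 2))) by (apply Rmult_le_pos; nra).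
    assert (3 / 4 * s ^ 2 * a * / d ^ 2 <= 3 / 4 * s ^ 2 * a * (2 / (1 + d ^ 2)))
      by (apply Rmult_le_compat_l; auto).
    lra.
  - eapply Rle_trans; [apply Rabs_arg_moment_le_pi; auto|].
    assert (1 <= 2 / (1 + d ^ 2)).
    { apply (Rmult_le_reg_r (1 + d ^ 2)); [lra|].
      unfold Rdiv; rewrite Rmult_assoc, Rinv_l by lra. lra. }
    assert (PI * a * 1 <= PI * a * (2 / (1 + d ^ 2))) by (apply Rmult_le_compat_l; nra).
    assert (0 <= 3 / 4 * s ^ 2 * a * (2 / (1 + d ^ 2))) by (apply Rmult_le_pos; lra).
    lra.
Qed.

Lemma sqdist_sub_ge p a d s :
  0 < p -> p <= s -> (1 <= Rabs d \/ a <= p / 2) ->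
  Rmin (p ^ 2 / 4) (1 / 2) * (1 + d ^ 2) <= sqdist_sub a d s.
Proof.
  intros Hp Hs Hcase. unfold sqdist_sub.
  pose proof (Rmin_l (p ^ 2 / 4) (1 / 2)). pose proof (Rmin_r (p ^ 2 / 4) (1 / 2)).
  assert (0 < Rmin (p ^ 2 / 4) (1 / 2)) by (apply Rmin_glb_lt; nra).
  pose proof (pow2_ge_0 (s - a)). pose proof (pow2_ge_0 d).
  destruct Hcase as [Hfar|Hsmall].
  - assert (1 <= d ^ 2) by (rewrite <- (pow2_abs d); nra). nra.
  - assert (p ^ 2 / 4 <= (s - a) ^ 2) by nra. nra.
Qed.

Lemma small_weight_near_line p a b t :
  0 < a -> a / (1 + b ^ 2) < p / 2 / (1 + (Rabs t + 1) ^ 2) -> 1 <= Rabs (t - b) \/ a <= p / 2.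
Proof.
  intros Ha Hw. destruct (Rle_or_lt 1 (Rabs (t - b))) as [Hfar|Hnear]; [now left | right].
  assert (Hb : Rabs b <= Rabs t + 1).
  { replace b with (t - (t - b)) by ring. eapply Rle_trans; [apply Rabs_triang|].
    rewrite Rabs_Ropp. lra. }
  assert (b ^ 2 <= (Rabs t + 1) ^ 2) by (rewrite <- (pow2_abs b); pose proof (Rabs_pos b); nra).
  pose proof (pow2_ge_0 b).
  assert (a / (1 + (Rabs t + 1) ^ 2) <= a / (1 + b ^ 2)).
  { apply Rmult_le_compat_l; [lra|]. apply Rinv_le_contravar; lra. }
  assert (Hlt : a * / (1 + (Rabs t + 1) ^ 2) < p / 2 * / (1 + (Rabs t + 1) ^ 2)) by (unfold Rdiv in *; lra).
  apply Rmult_lt_reg_r in Hlt; [lra|]. apply Rinv_0_lt_compat. pose proof (pow2_ge_0 (Rabs t + 1)). lra.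
Qed.

(** * Unit windows *)

Definition window_coef (g : R) (j : nat) : R :=
  match j with O => PI | S _ => 3 / 4 * g ^ 2 / INR j ^ 2 end.

Lemma window_coef_ge0 g j : 0 <= window_coef g j.
Proof.
  destruct j as [|j]; unfold window_coef; [pose proof PI_RGT_0; lra|].
  apply Rdiv_le_0_compat; [pose proof (pow2_ge_0 g); lra|].
  apply pow2_gt_0, not_0_INR. discriminate.
Qed.

Lemma Rabs_arg_moment_le_window_coef a d g j :
  d <> 0 -> 0 < a -> INR j <= Rabs d -> Rabs (arg_moment a d g) <= window_coef g j * a.
Proof.
  intros Hd Ha Hj. destruct j as [|j].
  - now apply Rabs_arg_moment_le_pi.
  - eapply Rle_trans; [now apply Rabs_arg_moment_le_quad|]. unfold window_coef.
    assert (Hj0 : 0 < INR (S j)) by apply lt_0_INR, Nat.lt_0_succ.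
    assert (INR (S j) ^ 2 <= d ^ 2) by (rewrite <- (pow2_abs d); nra).
    replace (3 / 4 * g ^ 2 / INR (S j) ^ 2 * a) with (3 / 4 * g ^ 2 * a / INR (S j) ^ 2)
      by (field; lra).
    apply Rmult_le_compat_l; [pose proof (pow2_ge_0 g); nra|].
    apply Rinv_le_contravar; [nra | lra].
Qed.

Lemma sum_inv_sq_le n : sum_f_R0 (fun j => / (INR j + 1) ^ 2) n <= 2 - / (INR n + 1).
Proof.
  induction n as [|n IH]; [simpl; lra|].
  rewrite tech5, S_INR. pose proof (pos_INR n).
  (* telescoping: 1/(n+2)^2 <= 1/(n+1) - 1/(n+2) *)
  assert (/ (INR n + 1 + 1) ^ 2 <= / (INR n + 1) - / (INR n + 1 + 1)).
  { replace (/ (INR n + 1) - / (INR n + 1 + 1)) with (/ ((INR n + 1) * (INR n + 1 + 1)))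
      by (field; lra).
    apply Rinv_le_contravar; nra. }
  lra.
Qed.

Lemma sum_window_coef_le g J : sum_f_R0 (window_coef g) J <= PI + 3 / 2 * g ^ 2.
Proof.
  pose proof (pow2_ge_0 g). destruct J as [|J]; [simpl; lra|].
  rewrite (decomp_sum _ (S J)) by lia. simpl pred.
  rewrite (sum_eq _ (fun j => / (INR j + 1) ^ 2 * (3 / 4 * g ^ 2))).
  2: { intros j _. unfold window_coef. rewrite S_INR. field. pose proof (pos_INR j). lra. }
  rewrite <- scal_sum. pose proof (sum_inv_sq_le J).
  assert (0 < / (INR J + 1)) by (apply Rinv_0_lt_compat; pose proof (pos_INR J); lra).
  unfold window_coef. nra.
Qed.

(** * The Blaschke product on the line [Im s = t] *)

Section OnTheLine.

Variables (Z : nat -> option C) (t : R).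
Hypothesis zeros_pos : zeros_in_C0 Z.
Hypothesis zeros_off_line : forall n a, Z n = Some a -> Im a <> t.
Hypothesis summable : blaschke_cond Z.

Lemma zero_data k al : Z k = Some al -> 0 < Re al /\ t - Im al <> 0.
Proof. intros E. split; [exact (zeros_pos k al E) | pose proof (zeros_off_line k al E); lra]. Qed.

Definition zterm (f : R -> R -> R -> R) (k : nat) (s : R) : R :=
  match Z k with Some al => f (Re al) (t - Im al) s | None => 0 end.

Definition weight (k : nat) : R :=
  match Z k with Some al => Re al / (1 + Im al ^ 2) | None => 0 end.

Lemma weight_ge0 k : 0 <= weight k.
Proof.
  unfold weight. destruct (Z k) as [al|] eqn:E; [|lra].
  pose proof (zeros_pos k al E). pose proof (pow2_ge_0 (Im al)). apply Rdiv_le_0_compat; lra.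
Qed.

Lemma is_derive_zterm (f df : R -> R -> R -> R) :
  (forall a d s, d <> 0 -> is_derive (f a d) s (df a d s)) ->
  forall k s, is_derive (zterm f k) s (zterm df k s).
Proof.
  intros Hder k s. unfold zterm. destruct (Z k) as [al|] eqn:E.
  - apply Hder, (zero_data k al E).
  - apply is_derive_Reals, derivable_pt_lim_const.
Qed.

Lemma continuity_pt_zterm (f : R -> R -> R -> R) :
  (forall a d s, d <> 0 -> ex_derive (f a d) s) -> forall k s, continuity_pt (zterm f k) s.
Proof.
  intros Hex k s. apply continuity_pt_filterlim.
  apply (ex_derive_continuous (K := R_AbsRing) (V := R_NormedModule)).
  unfold zterm. destruct (Z k) as [al|] eqn:E.
  - apply Hex, (zero_data k al E).
  - exists 0. apply is_derive_Reals, derivable_pt_lim_const.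
Qed.

Lemma Rabs_zterm_arg_moment_le k s :
  Rabs (zterm arg_moment k s) <= (2 * PI + 3 / 2 * s ^ 2) * (2 * (1 + t ^ 2)) * weight k.
Proof.
  unfold zterm, weight. destruct (Z k) as [al|] eqn:E; [|rewrite Rabs_R0; lra].
  destruct (zero_data k al E) as [Ha Hd].
  eapply Rle_trans; [now apply Rabs_arg_moment_le|].
  rewrite Rmult_assoc. apply Rmult_le_compat_l.
  - pose proof PI_RGT_0. pose proof (pow2_ge_0 s). lra.
  - apply div_one_add_sq_le_shift. lra.
Qed.

Lemma ex_series_zterm_arg_moment s : ex_series (fun k => zterm arg_moment k s).
Proof.
  apply (ex_series_le_eventually _ _ 0 (fun k _ => Rabs_zterm_arg_moment_le k s)).
  now apply ex_series_scal_R.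
Qed.

(* Only finitely many zeros with [|t - Im α| < 1] have [Re α > p/2], by the Blaschke condition. *)
Lemma zterm_derivatives_bound p : 0 < p ->
  exists K0 K, forall k s, (K0 <= k)%nat -> p <= s ->
    Rabs (zterm log_abs_factor' k s) <= K * weight k /\
    Rabs (zterm arg_factor' k s) <= K * weight k.
Proof.
  intros Hp.
  set (eta := p / 2 / (1 + (Rabs t + 1) ^ 2)).
  assert (Heta : 0 < eta).
  { apply Rdiv_lt_0_compat; [lra|]. pose proof (pow2_ge_0 (Rabs t + 1)). lra. }
  pose proof (ex_series_lim_0 _ summable) as Hlim. apply is_lim_seq_spec in Hlim.
  destruct (Hlim (mkposreal eta Heta)) as [K0 HK0]; simpl in HK0.
  set (c := Rmin (p ^ 2 / 4) (1 / 2)).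
  assert (Hc : 0 < c) by (apply Rmin_glb_lt; nra).
  exists K0, (2 / c * (2 * (1 + t ^ 2))). intros k s Hk Hs.
  specialize (HK0 k Hk). rewrite Rminus_0_r in HK0. fold (weight k) in HK0.
  unfold zterm, weight in *. destruct (Z k) as [al|] eqn:E; [|rewrite Rabs_R0; lra].
  destruct (zero_data k al E) as [Ha Hd].
  set (a := Re al) in *. set (b := Im al) in *.
  assert (Hsmall : 1 <= Rabs (t - b) \/ a <= p / 2).
  { apply small_weight_near_line; auto.
    rewrite Rabs_pos_eq in HK0; [exact HK0|]. pose proof (pow2_ge_0 b). apply Rdiv_le_0_compat; lra. }
  pose proof (sqdist_sub_ge p a (t - b) s Hp Hs Hsmall) as Hsub. fold c in Hsub.
  pose proof (pow2_ge_0 (t - b)).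
  assert (Hbound : 2 * a / sqdist_sub a (t - b) s <= 2 / c * (2 * (1 + t ^ 2)) * (a / (1 + b ^ 2))).
  { apply Rle_trans with (2 / c * (a / (1 + (t - b) ^ 2))).
    - replace (2 / c * (a / (1 + (t - b) ^ 2))) with (2 * a / (c * (1 + (t - b) ^ 2))) by (field; lra).
      apply Rmult_le_compat_l; [lra|]. apply Rinv_le_contravar; [nra | exact Hsub].
    - rewrite Rmult_assoc. apply Rmult_le_compat_l; [apply Rdiv_le_0_compat; lra|].
      apply div_one_add_sq_le_shift. lra. }
  split; eapply Rle_trans; try exact Hbound.
  - apply Rabs_log_abs_factor'_le; lra.
  - apply Rabs_arg_factor'_le; lra.
Qed.

Definition log_abs_incr (x s : R) : R :=
  Series (fun k => zterm log_abs_factor k s - zterm log_abs_factor k x).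
Definition arg_incr (x s : R) : R :=
  Series (fun k => zterm arg_factor k s - zterm arg_factor k x).
Definition log_abs_deriv (s : R) : R := Series (fun k => zterm log_abs_factor' k s).
Definition arg_deriv (s : R) : R := Series (fun k => zterm arg_factor' k s).
Definition moment (s : R) : R := Series (fun k => zterm arg_moment k s).

Lemma incr_diag x : log_abs_incr x x = 0 /\ arg_incr x x = 0.
Proof.
  unfold log_abs_incr, arg_incr.
  split; (transitivity (Series (fun _ : nat => 0 * 0));
    [apply Series_ext; intros; ring | rewrite Series_scal_l; ring]).
Qed.

Lemma ex_series_incr x s : 0 < x -> 0 < s ->
  ex_series (fun k => zterm log_abs_factor k s - zterm log_abs_factor k x) /\
  ex_series (fun k => zterm arg_factor k s - zterm arg_factor k x).
Proof.
  intros Hx Hs. assert (Hp : 0 < Rmin x s) by (apply Rmin_glb_lt; auto).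
  destruct (zterm_derivatives_bound (Rmin x s) Hp) as [K0 [K Hbound]].
  assert (Hm : ex_series (fun k => K * Rabs (s - x) * weight k)) by now apply ex_series_scal_R.
  split; refine (ex_series_le_eventually _ _ K0 _ Hm); intros k Hk; cbv beta;
    replace (K * Rabs (s - x) * weight k) with (K * weight k * Rabs (s - x)) by ring.
  - apply (Rabs_sub_le_of_derive_bound _ (zterm log_abs_factor' k)).
    + apply is_derive_zterm, is_derive_log_abs_factor.
    + intros y Hy. apply Hbound; auto. lra.
  - apply (Rabs_sub_le_of_derive_bound _ (zterm arg_factor' k)).
    + apply is_derive_zterm, is_derive_arg_factor.
    + intros y Hy. apply Hbound; auto. lra.
Qed.

Lemma is_derive_incr x : 0 < x ->
  is_derive (log_abs_incr x) x (log_abs_deriv x) /\ is_derive (arg_incr x) x (arg_deriv x).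
Proof.
  intros Hx. destruct (zterm_derivatives_bound (x / 2) ltac:(lra)) as [K0 [K Hbound]].
  assert (Hm : ex_series (fun k => K * weight k)) by now apply ex_series_scal_R.
  split; apply (is_derive_Series _ _ _ x (half_ball x Hx) K0 Hm).
  - intros k y _. apply is_derive_sub_const, is_derive_zterm, is_derive_log_abs_factor.
  - intros k y _. apply continuity_pt_zterm, ex_derive_log_abs_factor'.
  - intros k y Hk Hy. apply Boule_half_ball in Hy. apply Hbound; auto; lra.
  - intros y Hy. apply Boule_half_ball in Hy. apply ex_series_incr; lra.
  - intros k y _. apply is_derive_sub_const, is_derive_zterm, is_derive_arg_factor.
  - intros k y _. apply continuity_pt_zterm, ex_derive_arg_factor'.
  - intros k y Hk Hy. apply Boule_half_ball in Hy. apply Hbound; auto; lra.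
  - intros y Hy. apply Boule_half_ball in Hy. apply ex_series_incr; lra.
Qed.

Lemma continuity_pt_arg_deriv x : 0 < x -> continuity_pt arg_deriv x.
Proof.
  intros Hx. destruct (zterm_derivatives_bound (x / 2) ltac:(lra)) as [K0 [K Hbound]].
  apply (continuity_pt_Series _ (fun k => K * weight k) x (half_ball x Hx) K0).
  - now apply ex_series_scal_R.
  - intros k y Hk Hy. apply Boule_half_ball in Hy. apply Hbound; auto; lra.
  - intros k y _. apply continuity_pt_zterm, ex_derive_arg_factor'.
  - apply Boule_center.
Qed.

Lemma is_derive_moment x : 0 < x -> is_derive moment x (x * arg_deriv x).
Proof.
  intros Hx. destruct (zterm_derivatives_bound (x / 2) ltac:(lra)) as [K0 [K Hbound]].
  unfold arg_deriv. rewrite <- Series_scal_l.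
  apply (is_derive_Series (zterm arg_moment) (fun k y => y * zterm arg_factor' k y)
           (fun k => 3 * x / 2 * (K * weight k)) x (half_ball x Hx) K0).
  - now do 2 apply ex_series_scal_R.
  - intros k y _.
    replace (y * zterm arg_factor' k y) with (zterm (fun a d s => s * arg_factor' a d s) k y)
      by (unfold zterm; destruct (Z k); ring).
    apply is_derive_zterm, is_derive_arg_moment.
  - intros k y _. apply (continuity_pt_mult (fun y => y)); [apply continuity_pt_id|].
    apply continuity_pt_zterm, ex_derive_arg_factor'.
  - intros k y Hk Hy. apply Boule_half_ball in Hy.
    rewrite Rabs_mult, (Rabs_pos_eq y) by lra.
    apply Rmult_le_compat; [lra | apply Rabs_pos | lra | apply Hbound; auto; lra].
  - intros y _. apply ex_series_zterm_arg_moment.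
Qed.

Lemma moment_0 : moment 0 = 0.
Proof.
  unfold moment. transitivity (Series (fun _ : nat => 0 * 0)); [|rewrite Series_scal_l; ring].
  apply Series_ext. intros k. unfold zterm. destruct (Z k) as [al|] eqn:E; [|ring].
  rewrite Rmult_0_l. apply arg_moment_0, (zero_data k al E).
Qed.

Lemma continuity_pt_moment_0 : continuity_pt moment 0.
Proof.
  apply (continuity_pt_Series _ (fun k => (2 * PI + 3 / 2) * (2 * (1 + t ^ 2)) * weight k)
           0 (mkposreal 1 Rlt_0_1) 0).
  - now apply ex_series_scal_R.
  - intros k y _ Hy. unfold Boule in Hy; simpl in Hy. rewrite Rminus_0_r in Hy.
    eapply Rle_trans; [apply Rabs_zterm_arg_moment_le|].
    assert (y ^ 2 <= 1) by (rewrite <- (pow2_abs y); pose proof (Rabs_pos y); nra).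
    pose proof (weight_ge0 k). pose proof (pow2_ge_0 t).
    apply Rmult_le_compat_r; auto. apply Rmult_le_compat_r; lra.
  - intros k y _. apply continuity_pt_zterm. intros a d s Hd. eexists. now apply is_derive_arg_moment.
  - apply Boule_center.
Qed.

Lemma RInt_moment a b : 0 < a <= b -> RInt (fun s => s * arg_deriv s) a b = moment b - moment a.
Proof.
  intros Hab. apply is_RInt_unique, (is_RInt_derive moment).
  - intros y Hy. rewrite Rmin_left, Rmax_right in Hy by lra. apply is_derive_moment. lra.
  - intros y Hy. rewrite Rmin_left, Rmax_right in Hy by lra. apply continuity_pt_filterlim.
    apply (continuity_pt_mult (fun s => s)); [apply continuity_pt_id | apply continuity_pt_arg_deriv; lra].
Qed.

Fixpoint bconst_prod (N : nat) : C :=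
  match N with
  | O => 1%C
  | S n => (bconst_prod n * match Z n with Some a => bconst a | None => 1%C end)%C
  end.

Lemma bpartial_cexp s N :
  bpartial Z (s, t) N =
  (bconst_prod N * cexp (psum (fun k => zterm log_abs_factor k s) N)
                        (psum (fun k => zterm arg_factor k s) N))%C.
Proof.
  induction N as [|n IH]; simpl; [rewrite cexp_0; ring|].
  rewrite IH, <- cexp_add. destruct (Z n) as [al|] eqn:E.
  - assert (Hz : forall f, zterm f n s = f (Re al) (t - Im al) s) by (intros; unfold zterm; now rewrite E).
    rewrite !Hz, <- factor_cexp by apply (zero_data n al E). unfold bfactor.
    replace ((s, t) - al)%C with ((s - Re al, t - Im al) : C)
      by (destruct al; unfold Cminus, Cplus, Copp; simpl; f_equal; ring).
    replace ((s, t) + Cconj al)%C with ((s + Re al, t - Im al) : C)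
      by (destruct al; unfold Cconj, Cplus; simpl; f_equal; ring).
    ring.
  - assert (Hz : forall f, zterm f n s = 0) by (intros; unfold zterm; now rewrite E).
    rewrite !Hz, cexp_0. ring.
Qed.

Lemma blaschke_on_line (B : C -> C) : is_blaschke_product Z B ->
  forall x s, 0 < x -> 0 < s -> B (s, t) = (B (x, t) * cexp (log_abs_incr x s) (arg_incr x s))%C.
Proof.
  intros HB x s Hx Hs. destruct (ex_series_incr x s Hx Hs) as [Hlog Harg].
  assert (Hpartial : forall N, bpartial Z (s, t) N =
    Cmult (bpartial Z (x, t) N)
      (cexp (psum (fun k => zterm log_abs_factor k s - zterm log_abs_factor k x) N)
            (psum (fun k => zterm arg_factor k s - zterm arg_factor k x) N))).
  { intros N. rewrite !bpartial_cexp, !psum_minus, <- Cmult_assoc, cexp_add.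
    do 3 f_equal; ring. }
  destruct (is_lim_seq_Cmult_cexp _ _ _ _ _ _ (HB (x, t) Hx) (is_lim_seq_psum _ Hlog) (is_lim_seq_psum _ Harg))
    as [Hre Him].
  apply (filterlim_C_unique (bpartial Z (s, t))); [exact (HB (s, t) Hs)| |];
    eapply is_lim_seq_ext; try (intros N; rewrite Hpartial; reflexivity); assumption.
Qed.

Lemma logderiv_on_line (B B' : C -> C) : is_blaschke_product Z B ->
  (forall s, 0 < Re s -> @is_derive C_AbsRing C_NormedModule B s (B' s)) ->
  forall x, 0 < x -> B' (x, t) = (B (x, t) * (log_abs_deriv x, arg_deriv x))%C.
Proof.
  intros HB HB' x Hx.
  destruct (is_derive_horizontal B x t (B' (x, t)) (HB' (x, t) Hx)) as [Hre Him].
  destruct (is_derive_incr x Hx) as [Hlog Harg]. destruct (incr_diag x) as [E1 E2].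
  destruct (is_derive_Cmult_cexp_at_0 (B (x, t)) _ _ x _ _ Hlog Harg E1 E2) as [Hre' Him'].
  assert (Hnear : locally x (fun y => B (y, t) = (B (x, t) * cexp (log_abs_incr x y) (arg_incr x y))%C)).
  { exists (half_ball x Hx). intros y Hy. apply blaschke_on_line; auto.
    unfold ball in Hy; simpl in Hy; unfold AbsRing_ball, abs, minus, plus, opp in Hy; simpl in Hy.
    apply Rabs_def2 in Hy. unfold half_ball in Hy; simpl in Hy. lra. }
  apply (is_derive_ext_loc (fun y => Re (B (x, t) * cexp (log_abs_incr x y) (arg_incr x y))%C)
           (fun y => Re (B (y, t)))) in Hre'.
  2: { generalize Hnear; apply filter_imp. intros y Hy. exact (eq_sym (f_equal Re Hy)). }
  apply (is_derive_ext_loc (fun y => Im (B (x, t) * cexp (log_abs_incr x y) (arg_incr x y))%C)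
           (fun y => Im (B (y, t)))) in Him'.
  2: { generalize Hnear; apply filter_imp. intros y Hy. exact (eq_sym (f_equal Im Hy)). }
  apply is_derive_unique in Hre, Him, Hre', Him'. rewrite Hre' in Hre. rewrite Him' in Him.
  destruct (B' (x, t)). unfold Re, Im in *; simpl in *. now subst.
Qed.


Lemma Im_logderiv_on_line (B B' : C -> C) : is_blaschke_product Z B ->
  (forall s, 0 < Re s -> @is_derive C_AbsRing C_NormedModule B s (B' s)) ->
  forall x, 0 < x -> B (x, t) <> 0%C -> Im (B' (x, t) / B (x, t))%C = arg_deriv x.
Proof.
  intros HB HB' x Hx Hnz. rewrite (logderiv_on_line B B' HB HB' x Hx).
  unfold Cdiv. rewrite (Cmult_comm (B (x, t))), <- Cmult_assoc, Cinv_r, Cmult_1_r by exact Hnz.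
  reflexivity.
Qed.

Lemma blaschke_on_line_neq0 (B : C -> C) : is_blaschke_product Z B ->
  forall x s, 0 < x -> 0 < s -> B (x, t) <> 0%C -> B (s, t) <> 0%C.
Proof.
  intros HB x s Hx Hs Hnz. rewrite (blaschke_on_line B HB x s Hx Hs).
  apply Cmult_neq_0; [exact Hnz | apply cexp_neq0].
Qed.

Lemma RInt_Im_logderiv_on_line (B B' : C -> C) : is_blaschke_product Z B ->
  (forall s, 0 < Re s -> @is_derive C_AbsRing C_NormedModule B s (B' s)) ->
  forall a b, 0 < a <= b -> B (b, t) <> 0%C ->
  RInt (fun s => s * Im (B' (s, t) / B (s, t))%C) a b = moment b - moment a.
Proof.
  intros HB HB' a b Hab Hnz. rewrite <- RInt_moment by exact Hab. apply RInt_ext.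
  intros x Hx. rewrite Rmin_left, Rmax_right in Hx by lra.
  rewrite (Im_logderiv_on_line B B' HB HB' x); [reflexivity | lra|].
  apply (blaschke_on_line_neq0 B HB b); auto; lra.
Qed.

(* The integrand vanishes because [z / 0 = 0]. *)
Lemma RInt_Im_logderiv_on_line_zero (B B' : C -> C) : is_blaschke_product Z B ->
  forall a b, 0 < a <= b -> B (b, t) = 0%C ->
  RInt (fun s => s * Im (B' (s, t) / B (s, t))%C) a b = 0.
Proof.
  intros HB a b Hab Hzero.
  rewrite (RInt_ext _ (fun _ => 0)), RInt_const; [unfold scal; simpl; unfold mult; simpl; ring|].
  intros x Hx. rewrite Rmin_left, Rmax_right in Hx by lra.
  rewrite (blaschke_on_line B HB b x), Hzero, Cmult_0_l by lra.
  unfold Cdiv, Cinv, Cmult, Im; simpl. unfold Rdiv. ring.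
Qed.

Lemma filterlim_moment_at_right_0 g :
  filterlim (fun e => moment g - moment e) (at_right 0) (locally (moment g)).
Proof.
  assert (Hcont : continuity_pt (fun e => moment g - moment e) 0).
  { apply (continuity_pt_minus (fun _ => _) moment).
    - apply continuity_pt_const. now intros ? ?.
    - apply continuity_pt_moment_0. }
  pose proof (filterlim_at_right_continuity_pt _ 0 Hcont) as Hlim.
  cbv beta in Hlim. now rewrite moment_0, Rminus_0_r in Hlim.
Qed.

Definition window_term (tau : R) (k : nat) : R :=
  match Z k with
  | Some a => if Rle_dec tau (Im a) then if Rle_dec (Im a) (tau + 1) then Re a else 0 else 0
  | None => 0
  end.

Lemma window_sum_S tau n : window_sum Z tau (S n) = window_sum Z tau n + window_term tau n.
Proof. reflexivity. Qed.

Lemma window_term_ge0 tau k : 0 <= window_term tau k.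
Proof.
  unfold window_term. destruct (Z k) as [al|] eqn:E; [|lra]. pose proof (zeros_pos k al E).
  destruct (Rle_dec _ _); [destruct (Rle_dec _ _)|]; lra.
Qed.

Lemma Re_le_window_terms k al j :
  Z k = Some al -> INR j <= Rabs (t - Im al) < INR j + 1 ->
  Re al <= window_term (t + INR j) k + window_term (t - INR j - 1) k.
Proof.
  intros E Hj. pose proof (window_term_ge0 (t + INR j) k). pose proof (window_term_ge0 (t - INR j - 1) k).
  unfold window_term in *. rewrite E in *.
  destruct (Rle_or_lt 0 (t - Im al)) as [Hpos|Hneg].
  - rewrite Rabs_pos_eq in Hj by lra.
    destruct (Rle_dec (t - INR j - 1) (Im al)); [|lra].
    destruct (Rle_dec (Im al) (t - INR j - 1 + 1)); lra.
  - rewrite Rabs_left in Hj by lra.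
    destruct (Rle_dec (t + INR j) (Im al)); [|lra].
    destruct (Rle_dec (Im al) (t + INR j + 1)); lra.
Qed.


Lemma Rabs_zterm_arg_moment_le_windows g J k :
  (forall al, Z k = Some al -> Rabs (t - Im al) <= INR J) ->
  Rabs (zterm arg_moment k g) <=
  sum_f_R0 (fun j => window_coef g j * (window_term (t + INR j) k + window_term (t - INR j - 1) k)) J.
Proof.
  intros HJ.
  assert (Hterms : forall j, 0 <= window_coef g j
                     * (window_term (t + INR j) k + window_term (t - INR j - 1) k)).
  { intros j. apply Rmult_le_pos; [apply window_coef_ge0|].
    pose proof (window_term_ge0 (t + INR j) k). pose proof (window_term_ge0 (t - INR j - 1) k). lra. }
  unfold zterm. destruct (Z k) as [al|] eqn:E; [|rewrite Rabs_R0; now apply cond_pos_sum].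
  destruct (zero_data k al E) as [Ha Hd].
  destruct (nfloor_ex (Rabs (t - Im al)) (Rabs_pos _)) as [j [Hj1 Hj2]].
  assert (HjJ : (j <= J)%nat) by (apply INR_le; specialize (HJ al eq_refl); lra).
  eapply Rle_trans; [|exact (sum_f_R0_ge_term _ J j Hterms HjJ)].
  eapply Rle_trans; [now apply (Rabs_arg_moment_le_window_coef _ _ _ j)|].
  apply Rmult_le_compat_l; [apply window_coef_ge0|]. now apply Re_le_window_terms.
Qed.

Lemma psum_Rabs_arg_moment_le_windows g J N :
  (forall k al, (k < N)%nat -> Z k = Some al -> Rabs (t - Im al) <= INR J) ->
  psum (fun k => Rabs (zterm arg_moment k g)) N <=
  sum_f_R0 (fun j => window_coef g j
                     * (window_sum Z (t + INR j) N + window_sum Z (t - INR j - 1) N)) J.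
Proof.
  induction N as [|N IH]; intros HJ.
  - simpl. apply cond_pos_sum. intros j. simpl. rewrite Rplus_0_r, Rmult_0_r. lra.
  - simpl psum.
    rewrite (sum_eq _ (fun j => window_coef g j
                                * (window_sum Z (t + INR j) N + window_sum Z (t - INR j - 1) N)
                              + window_coef g j
                                * (window_term (t + INR j) N + window_term (t - INR j - 1) N)))
      by (intros j _; rewrite !window_sum_S; ring).
    rewrite sum_plus. apply Rplus_le_compat.
    + apply IH. intros k al Hk. apply HJ. lia.
    + apply Rabs_zterm_arg_moment_le_windows. intros al E. apply (HJ N); auto.
Qed.

Lemma zeros_distance_bounded N :
  exists J, forall k al, (k < N)%nat -> Z k = Some al -> Rabs (t - Im al) <= INR J.
Proof.
  induction N as [|N [J HJ]]; [exists 0%nat; intros; lia|].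
  destruct (Z N) as [al0|] eqn:E.
  - destruct (nfloor_ex (Rabs (t - Im al0)) (Rabs_pos _)) as [j [_ Hj]].
    exists (Nat.max J (S j)). intros k al Hk Ek.
    pose proof (le_INR _ _ (Nat.le_max_l J (S j))). pose proof (le_INR _ _ (Nat.le_max_r J (S j))).
    rewrite S_INR in *. destruct (Nat.eq_dec k N) as [->|Hne].
    + rewrite E in Ek. injection Ek as <-. lra.
    + specialize (HJ k al ltac:(lia) Ek). lra.
  - exists J. intros k al Hk Ek. destruct (Nat.eq_dec k N) as [->|Hne].
    + congruence.
    + apply (HJ k); auto. lia.
Qed.

Lemma Rabs_moment_le g M :
  (forall tau N, window_sum Z tau N <= M) -> Rabs (moment g) <= (2 * PI + 3 * g ^ 2) * M.
Proof.
  intros HM. assert (HM0 : 0 <= M) by apply (HM 0 0%nat).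
  assert (Hpsum : forall N, Rabs (psum (fun k => zterm arg_moment k g) N) <= (2 * PI + 3 * g ^ 2) * M).
  { intros N. destruct (zeros_distance_bounded N) as [J HJ].
    eapply Rle_trans; [apply Rabs_psum_le|].
    eapply Rle_trans; [exact (psum_Rabs_arg_moment_le_windows g J N HJ)|].
    apply Rle_trans with (sum_f_R0 (fun j => window_coef g j * (2 * M)) J).
    - apply sum_Rle. intros j _. apply Rmult_le_compat_l; [apply window_coef_ge0|].
      pose proof (HM (t + INR j) N). pose proof (HM (t - INR j - 1) N). lra.
    - rewrite <- scal_sum. pose proof (sum_window_coef_le g J). nra. }
  pose proof (is_lim_seq_abs _ _ (is_lim_seq_psum _ (ex_series_zterm_arg_moment g))) as Hlim.
  exact (is_lim_seq_le _ _ _ _ Hpsum Hlim (is_lim_seq_const _)).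
Qed.

End OnTheLine.

Theorem lemma3p8 (Z : nat -> option C) (B B' : C -> C)
  (HZ : zeros_in_C0 Z) (Hbl : blaschke_cond Z)
  (HB : is_blaschke_product Z B)
  (HB' : forall s : C, 0 < Re s -> @is_derive C_AbsRing C_NormedModule B s (B' s))
  (gamma t : R) (Hgamma : 0 < gamma)
  (Hline : forall n a, Z n = Some a -> Im a <> t)
  (M : R) (HM : forall (tau : R) (N : nat), window_sum Z tau N <= M) :
  exists I : R,
    filterlim
      (fun eps => RInt (fun sigma => sigma * Im (B' (sigma, t) / B (sigma, t))%C) eps gamma)
      (at_right 0) (locally I)
    /\ Rabs I <= (2 * PI + PI ^ 2 / 3 * gamma ^ 2) * M.
Proof.
  assert (HM0 : 0 <= M) by apply (HM 0 0%nat).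
  assert (Hpi : 3 <= PI ^ 2 / 3) by (pose proof PI2_3_2; nra).
  pose proof PI_RGT_0. pose proof (pow2_ge_0 gamma).
  pose proof (at_right_lt 0 gamma Hgamma) as Hnear.
  (* [B] vanishes either nowhere or everywhere on the half-line [Im s = t]. *)
  destruct (classic (B (gamma, t) = 0%C)) as [Hzero|Hnz].
  - exists 0. split; [|rewrite Rabs_R0; apply Rmult_le_pos; nra].
    apply (filterlim_ext_loc (fun _ => 0)); [|apply filterlim_const].
    generalize Hnear; apply filter_imp; intros e He.
    symmetry. apply (RInt_Im_logderiv_on_line_zero Z t HZ Hline Hbl B B' HB); auto; lra.
  - exists (moment Z t gamma). split.
    + apply (filterlim_ext_loc (fun e => moment Z t gamma - moment Z t e));
        [|now apply filterlim_moment_at_right_0].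
      generalize Hnear; apply filter_imp; intros e He.
      symmetry. apply (RInt_Im_logderiv_on_line Z t HZ Hline Hbl B B' HB HB'); auto; lra.
    + eapply Rle_trans; [now apply Rabs_moment_le|].
      apply Rmult_le_compat_r; nra.
Qed.
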